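(* Let $(\mathcal{X},\rho,\nu)$ be a metric measure space where $\rho$ is a doubling metric and $\nu$ is a finite Borel measure. Then the set $\mathcal{F}_0$ of measurable functions with $\nu$-negligible boundary is dense in $L^1(\mathcal{X},\nu)$: for every $\eta\in L^1(\mathcal{X},\nu)$ and every $\delta>0$ there is $\eta'\in L^1(\mathcal{X},\nu)$ with $\nu(\partial_{\eta'}\mathcal{X})=0$ and $\|\eta-\eta'\|_{L^1(\mathcal{X},\nu)}<\delta$.
   Context: A metric is doubling (with doubling dimension $d$) if every open ball $B(x,r)$ can be covered by $2^d$ balls of radius $r/2$. For a measurable $\eta$, $\mathrm{margin}_\eta(x)=\inf\{\rho(x,x'):\eta(x')\ne\eta(x)\}$ (infimum of empty set $=+\infty$) and $\partial_\eta\mathcal{X}=\{x:\mathrm{margin}_\eta(x)=0\}$. $\mathcal{F}_0=\{\eta \text{ measurable}:\nu(\partial_\eta\mathcal{X})=0\}$. *)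

From HB Require Import structures.
From mathcomp Require Import all_boot all_order all_algebra.
From mathcomp Require Import all_classical all_reals all_analysis.
Set Implicit Arguments. Unset Strict Implicit. Unset Printing Implicit Defensive.
Import Order.TTheory GRing.Theory Num.Theory.
Local Open Scope classical_set_scope.
Local Open Scope ring_scope.

Definition is_metric {R : realType} {T : Type} (rho : T -> T -> R) : Prop :=
  [/\ (forall x y, 0 <= rho x y),
      (forall x y, rho x y = 0 <-> x = y),
      (forall x y, rho x y = rho y x) &
      (forall x y z, rho x z <= rho x y + rho y z)].

Definition rball {R : realType} {T : Type} (rho : T -> T -> R) (x : T) (r : R)
  : set T := [set y | rho x y < r].

Definition rho_open {R : realType} {T : Type} (rho : T -> T -> R) : set (set T) :=
  [set A | forall x, A x -> exists2 r : R, 0 < r & rball rho x r `<=` A].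

Definition doubling {R : realType} {T : Type} (rho : T -> T -> R) : Prop :=
  exists dd : nat, forall (x : T) (r : R), 0 < r ->
    exists c : 'I_(2 ^ dd) -> T,
      rball rho x r `<=` \bigcup_(i in [set: 'I_(2 ^ dd)]) rball rho (c i) (r / 2).

(* margin_eta(x) = inf { rho(x,x') : eta x' <> eta x }, inf of empty = +oo *)
Definition margin {R : realType} {T : Type} (rho : T -> T -> R) (eta : T -> R)
  (x : T) : \bar R :=
  ereal_inf [set (rho x x')%:E | x' in [set x' | eta x' <> eta x]].

Definition boundary {R : realType} {T : Type} (rho : T -> T -> R) (eta : T -> R)
  : set T := [set x | margin rho eta x = 0%E].

(* By L^1-density of simple functions it suffices to approximate c * 1_A for
   a measurable A by c * 1_B, where B is "locally constant off a null set":
   every point outside a nu-null set has a ball inside B or inside ~` B.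
   Finite sums of such functions are locally constant off a null set, hence
   have nu-negligible boundary.  The sets A approximable in measure of
   symmetric difference by such B contain the open sets and form a
   sigma-algebra (countable unions by continuity of the finite measure), so
   they contain all Borel sets.  For an open U, with g the distance to ~` U,
   U is the increasing union of the open sets {g > 1/(n+1)}, and {g > t} is
   locally constant off the level set {g = t}; these level sets are disjoint,
   so by finiteness of nu all but countably many of them are null. *)

From HB Require Import structures.
From mathcomp Require Import all_boot all_order all_algebra.
From mathcomp Require Import all_classical all_reals all_analysis.
From mathcomp Require Import finmap lra measurable_realfun.
Import Order.TTheory GRing.Theory Num.Theory.
Import numFieldNormedType.Exports HBSimple.
Local Open Scope classical_set_scope.
Local Open Scope ring_scope.

Lemma indic_setY {R : numDomainType} {T : Type} (A B : set T) (x : T) :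
  `|\1_A x - \1_B x| = \1_(A `+` B) x :> R.
Proof.
rewrite /indic; have [Ax|nAx] := pselect (A x); have [Bx|nBx] := pselect (B x).
- rewrite (mem_set Ax) (mem_set Bx) (memNset (_ : ~ (A `+` B) x)).
    by rewrite subrr normr0.
  by case=> -[].
- rewrite (mem_set Ax) (memNset nBx) (mem_set (_ : (A `+` B) x)).
    by rewrite subr0 normr1.
  by left.
- rewrite (memNset nAx) (mem_set Bx) (mem_set (_ : (A `+` B) x)).
    by rewrite sub0r normrN normr1.
  by right.
- rewrite (memNset nAx) (memNset nBx) (memNset (_ : ~ (A `+` B) x)).
    by rewrite subrr normr0.
  by case=> -[].
Qed.

Lemma itv_oo_not_countable {R : realType} {a b : R} :
  a < b -> ~ countable [set` `]a, b[].
Proof.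
move=> ab /countable_lebesgue_measure0; rewrite lebesgue_measure_itv /= lte_fin ab.
by move=> /eqP; rewrite -EFinD eqe subr_eq0 => /eqP ba; move: ab; rewrite ba ltxx.
Qed.

Section finite_measure.
Context {d} {T : measurableType d} {R : realType} {nu : {measure set T -> \bar R}}.
Hypothesis nu_fin : (nu setT < +oo)%E.

Lemma finite_measure_lty {A : set T} : measurable A -> (nu A < +oo)%E.
Proof.
by move=> mA; rewrite (le_lt_trans _ nu_fin) // le_measure ?inE //; exact: mem_set.
Qed.

Lemma trivIset_measure_gt_finite (I : choiceType) (S : set I)
    (F : I -> set T) (e : R) :
  (forall i, measurable (F i)) -> trivIset S F -> 0 < e ->
  finite_set [set i | S i /\ (e%:E < nu (F i))%E].
Proof.
move=> mF tF e0; pose M := fine (nu setT).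
apply: contrapT => /(infinite_set_fset (Num.truncn (M / e)).+1) [B BS cardB].
have tB : trivIset [set` B] F by move=> i j /BS[Si _] /BS[Sj _]; exact: tF.
have : (\sum_(i <- B) e%:E <= nu setT)%E.
  apply: (@le_trans _ _ (\sum_(i <- B) nu (F i))%E).
    rewrite big_seq_cond [leRHS]big_seq_cond.
    by apply: lee_sum => i /andP[/BS[_ /ltW]].
  rewrite -measure_fbigsetU //; apply: le_measure; rewrite //; apply: mem_set => //.
  exact: bigsetU_measurable.
have /fineK nuT : nu setT \is a fin_num by rewrite ge0_fin_numE.
rewrite sumEFin big_const_seq count_predT iter_addr_0 -nuT -/M lee_fin.
apply/negP; rewrite -ltNge -mulr_natl -ltr_pdivrMr //.
by apply: lt_le_trans (truncnS_gt _) _; rewrite ler_nat.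
Qed.

Lemma trivIset_measure_gt0_countable (I : choiceType) (S : set I) (F : I -> set T) :
  (forall i, measurable (F i)) -> trivIset S F ->
  countable [set i | S i /\ (0 < nu (F i))%E].
Proof.
move=> mF tF; pose H n := [set i | S i /\ ((n.+1%:R^-1)%:E < nu (F i))%E].
apply: (@sub_countable _ _ _ (\bigcup_n H n)).
  apply: subset_card_le => i [Si nuF_gt0].
  have /fineK nuFE : nu (F i) \is a fin_num.
    by rewrite ge0_fin_numE // finite_measure_lty.
  rewrite -nuFE lte_fin in nuF_gt0; have [n] := ltr_add_invr nuF_gt0.
  by rewrite add0r => lt_n; exists n => //; split; rewrite // -nuFE lte_fin.
apply: bigcup_countable; first exact: countableP.
move=> n _; apply: finite_set_countable.
exact: trivIset_measure_gt_finite.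
Qed.

Lemma exists_null_level {g : T -> R} {a b : R} :
  (forall t, measurable [set x | g x = t]) -> a < b ->
  exists2 t, a < t < b & nu [set x | g x = t] = 0%E.
Proof.
move=> mL ab; pose L t := [set x | g x = t].
have tL : trivIset setT L by move=> s t _ _ [x [/= <- <-]].
apply: contrapT => nonull; apply: (itv_oo_not_countable ab).
have := trivIset_measure_gt0_countable _ _ _ mL tL; apply: sub_countable.
apply: subset_card_le => t abt; split => //; rewrite lt0e measure_ge0 andbT.
by apply/eqP => nu0; apply: nonull; exists t; rewrite // -in_itv.
Qed.

Lemma bigcup_setD_measure_lt {F : (set T)^nat} {e : R} :
  (forall n, measurable (F n)) -> nondecreasing_seq F -> 0 < e ->
  exists n, (nu (\bigcup_k F k `\` F n) < e%:E)%E.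
Proof.
move=> mF ndF e0; pose G n := \bigcup_k F k `\` F n.
have mG n : measurable (G n) by apply: measurableD => //; exact: bigcupT_measurable.
have niG : nonincreasing_seq G.
  by move=> m n mn; apply/subsetPset; apply: setDS; apply/subsetPset/ndF.
have G0 : \bigcap_n G n = set0.
  apply/seteqP; split => // x Gx; have [n _ Fnx] := (Gx 0%N I).1.
  exact: (Gx n I).2 Fnx.
have := nonincreasing_cvg_mu (finite_measure_lty (mG 0%N)) mG _ niG.
rewrite G0 measure0 => /(_ measurable0 _ (nbhs_open_ereal_lt (f := fun=> e) e0)).
by move=> [n _ /(_ n (leqnn n))]; exists n.
Qed.

Lemma le_measure_subU2 {A B C : set T} :
  measurable A -> measurable B -> measurable C -> A `<=` B `|` C ->
  (nu A <= nu B + nu C)%E.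
Proof.
move=> mA mB mC ABC; apply: le_trans (measureU2 nu mB mC).
by apply: le_measure => //; apply: mem_set => //; exact: measurableU.
Qed.

Lemma measurableY {A B : set T} :
  measurable A -> measurable B -> measurable (A `+` B).
Proof. by move=> mA mB; apply: measurableU; exact: measurableD. Qed.

Lemma integrable_indic_finite {A : set T} :
  measurable A -> nu.-integrable setT (EFin \o \1_A).
Proof.
move=> mA; apply/integrableP; split; first exact/measurable_EFinP/measurable_indic.
under eq_integral do rewrite /= ger0_norm //.
by rewrite integral_indic // setIT finite_measure_lty.
Qed.

Lemma integral_normD_le {f g : T -> R} :
  measurable_fun setT f -> measurable_fun setT g ->
  (\int[nu]_x (`|f x + g x|)%:E <=
     \int[nu]_x (`|f x|)%:E + \int[nu]_x (`|g x|)%:E)%E.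
Proof.
move=> mf mg; have mnorm (h : T -> R) : measurable_fun [set: T] h ->
    measurable_fun [set: T] (fun x => (`|h x|)%:E : \bar R).
  by move=> mh; apply/measurable_EFinP; exact: measurableT_comp.
rewrite -ge0_integralD //; [|exact: mnorm..].
apply: ge0_le_integral => //.
- by apply: mnorm; exact: measurable_funD.
- by apply: emeasurable_funD; exact: mnorm.
- by move=> x _; rewrite -EFinD lee_fin ler_normD.
Qed.

Lemma sfun_dense_integrable {f : T -> R} {e : R} :
  nu.-integrable setT (EFin \o f) -> 0 < e ->
  exists g : {sfun T >-> R}, (\int[nu]_x (`|f x - g x|)%:E < e%:E)%E.
Proof.
move=> intf e0; have [g_ [_ _]] := approximation_sfun_integrable measurableT intf.
move=> /(_ _ (nbhs_open_ereal_lt (f := fun=> e) e0)) [n _ /(_ n (leqnn n))] /=.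
by exists (g_ n).
Qed.

End finite_measure.

Section metric_measure_space.
Context {d} {T : measurableType d} {R : realType} {nu : {measure set T -> \bar R}}.
Context {rho : T -> T -> R}.
Hypothesis nu_fin : (nu setT < +oo)%E.

Definition ae_locally_constant {U : Type} (f : T -> U) :=
  exists2 N, nu.-negligible N &
    forall x, ~ N x -> exists2 r : R, 0 < r & forall y, rball rho x r y -> f y = f x.

Lemma ae_locally_constant_cst {U : Type} (c : U) : ae_locally_constant (fun=> c).
Proof. by exists set0 => [|x _]; [exact: negligible_set0 | exists 1]. Qed.

Lemma ae_locally_constant_pair {U V : Type} {f : T -> U} {g : T -> V} :
  ae_locally_constant f -> ae_locally_constant g ->
  ae_locally_constant (fun x => (f x, g x)).
Proof.
move=> [N nN lcf] [N' nN' lcg]; exists (N `|` N'); first exact: negligibleU.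
move=> x /not_orP[/lcf[r r0 fr] /lcg[r' r'0 gr']].
exists (Num.min r r') => [|y]; first by rewrite lt_min r0 r'0.
by rewrite /rball /= lt_min => /andP[yr yr']; rewrite fr // gr'.
Qed.

Lemma ae_locally_constant_factor {U V : Type} {f : T -> U} {g : T -> V} :
  ae_locally_constant f -> (forall x y, f y = f x -> g y = g x) ->
  ae_locally_constant g.
Proof.
move=> [N nN lcf] fg; exists N => // x /lcf[r r0 fr].
by exists r => // y /fr; exact: fg.
Qed.

Lemma ae_locally_constant_boundary (f : T -> R) :
  ae_locally_constant f -> nu.-negligible (boundary rho f).
Proof.
move=> [N nN lcf]; apply: negligibleS nN => x; rewrite /boundary /margin /=.
move=> margin0; apply: contrapT => /lcf[r r0 fr].
have : (r%:E <= ereal_inf [set (rho x y)%:E | y in [set y | f y <> f x]])%E.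
  apply: le_ereal_inf_tmp => _ [y /= fyx <-].
  by rewrite lee_fin leNgt; apply/negP => /fr.
by rewrite margin0 lee_fin leNgt r0.
Qed.

(* A set B is its own membership function T -> Prop, so [ae_locally_constant B]
   is the "ball inside B or inside ~` B" condition. *)
Definition lc_approximable_set (A : set T) := measurable A /\
  forall e : R, 0 < e -> exists B,
    [/\ measurable B, ae_locally_constant B & (nu (A `+` B) < e%:E)%E].

Lemma lc_approximable_set0 : lc_approximable_set set0.
Proof.
split => // e e0; exists set0; split => //; first exact: ae_locally_constant_cst.
by rewrite setY0 measure0 lte_fin.
Qed.

Lemma lc_approximable_setC A :
  lc_approximable_set A -> lc_approximable_set (~` A).
Proof.
move=> [mA apA]; split; first exact: measurableC.
move=> e /apA[B [mB lcB AB]]; exists (~` B); split; first exact: measurableC.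
  by apply: ae_locally_constant_factor lcB _ => x y /= ->.
suff -> : ~` A `+` ~` B = A `+` B by [].
by rewrite /setY !setDE !setCK; apply/seteqP; split => x /=; tauto.
Qed.

Lemma lc_approximable_setU A A' : lc_approximable_set A ->
  lc_approximable_set A' -> lc_approximable_set (A `|` A').
Proof.
move=> [mA apA] [mA' apA']; split; first exact: measurableU.
move=> e e0; have e2 : 0 < e / 2 by rewrite divr_gt0.
have [B [mB lcB AB]] := apA _ e2; have [B' [mB' lcB' AB']] := apA' _ e2.
exists (B `|` B'); split; first exact: measurableU.
  apply: ae_locally_constant_factor (ae_locally_constant_pair lcB lcB') _.
  by move=> x y [/= -> ->].
have sub : (A `|` A') `+` (B `|` B') `<=` (A `+` B) `|` (A' `+` B').
  by move=> x /=; tauto.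
have mAB : measurable ((A `|` A') `+` (B `|` B')).
  by apply: measurableY; exact: measurableU.
have mAB' := measurableY mA' mB'.
have := le_measure_subU2 (nu := nu) mAB (measurableY mA mB) mAB' sub.
move=> /le_lt_trans; apply.
by rewrite (splitr e) EFinD lteD.
Qed.

Lemma lc_approximable_bigcup (F : (set T)^nat) :
  (forall n, lc_approximable_set (F n)) ->
  lc_approximable_set (\bigcup_n F n).
Proof.
move=> apF; have mF n := (apF n).1.
pose G k := \big[setU/set0]_(i < k.+1) F i.
have apG k : lc_approximable_set (G k).
  rewrite /G; elim: k.+1 => [|m IH].
    by rewrite big_ord0; exact: lc_approximable_set0.
  by rewrite big_ord_recr; exact: lc_approximable_setU.
have mU : measurable (\bigcup_n F n) by exact: bigcupT_measurable.
split => // e e0; have e2 : 0 < e / 2 by rewrite divr_gt0.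
have ndG : nondecreasing_seq G.
  by move=> m n mn; apply/subsetPset; exact: (@subset_bigsetU _ F m.+1 n.+1).
have [n UGn] := bigcup_setD_measure_lt nu_fin (fun k => (apG k).1) ndG e2.
rewrite bigcup_bigsetU_bigcup in UGn.
have [B [mB lcB GB]] := (apG n).2 _ e2.
exists B; split => //.
have GU : G n `<=` \bigcup_k F k by exact: bigsetU_bigcup.
have sub : \bigcup_k F k `+` B `<=` (\bigcup_k F k `\` G n) `|` (G n `+` B).
  by move=> x /=; have := GU x; have [] := pselect (G n x); tauto.
have mUG : measurable (\bigcup_k F k `\` G n) := measurableD mU (apG n).1.
have mUB := measurableY mU mB; have mGB := measurableY (apG n).1 mB.
move: (le_measure_subU2 (nu := nu) mUB mUG mGB sub) => /le_lt_trans; apply.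
by rewrite (splitr e) EFinD lteD.
Qed.

Hypothesis rho_metric : is_metric rho.
Hypothesis rho_borel : @measurable d T = <<s rho_open rho >>.

Lemma rho_open_measurable {U : set T} : rho_open rho U -> measurable U.
Proof. by rewrite rho_borel; exact: sub_gen_smallest. Qed.

Definition rho_lipschitz (g : T -> R) := forall x y, g x <= rho x y + g y.

Lemma rho_open_gt {g : T -> R} {t : R} :
  rho_lipschitz g -> rho_open rho [set x | t < g x].
Proof.
move=> glip x /= tgx; exists (g x - t) => [|y]; first by rewrite subr_gt0.
by rewrite /rball /= => rxy; have := glip x y; lra.
Qed.

Lemma rho_open_lt {g : T -> R} {t : R} :
  rho_lipschitz g -> rho_open rho [set x | g x < t].
Proof.
case: rho_metric => _ _ rhoC _ glip x /= gxt.
exists (t - g x) => [|y]; first by rewrite subr_gt0.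
by rewrite /rball /= => rxy; have := glip y x; rewrite rhoC; lra.
Qed.

Lemma measurable_level {g : T -> R} :
  rho_lipschitz g -> forall t, measurable [set x | g x = t].
Proof.
move=> glip t.
have -> : [set x | g x = t] = ~` ([set x | g x < t] `|` [set x | t < g x]).
  apply/seteqP; split => x /=; first by move=> ->; rewrite ltxx; case.
  move=> /not_orP[/negP + /negP]; rewrite -!leNgt => tgx gxt.
  by apply/eqP; rewrite eq_le gxt.
apply: measurableC; apply: measurableU; apply: rho_open_measurable.
  exact: rho_open_lt.
exact: rho_open_gt.
Qed.

Lemma ae_locally_constant_superlevel (g : T -> R) (t : R) :
  rho_lipschitz g -> nu [set x | g x = t] = 0%E ->
  ae_locally_constant [set x | t < g x].
Proof.
move=> glip null; exists [set x | g x = t].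
  exact/negligibleP/null/(measurable_level glip).
move=> x /eqP; rewrite neq_lt => /orP[] gxt.
  have [r r0 ball_lt] := rho_open_lt glip x gxt; exists r => // y /ball_lt /= gyt.
  by rewrite [t < g y]ltNge [t < g x]ltNge (ltW gyt) (ltW gxt).
have [r r0 ball_gt] := rho_open_gt glip x gxt; exists r => // y /ball_gt /= tgy.
by rewrite tgy gxt.
Qed.

Definition compl_dist (U : set T) (x : T) := inf [set rho x y | y in ~` U].

Lemma compl_dist_lipschitz {U : set T} :
  ~` U !=set0 -> rho_lipschitz (compl_dist U).
Proof.
case: rho_metric => rho_ge0 _ _ rho_tri [z nUz] x y.
have lb w : has_lbound [set rho w v | v in ~` U] by exists 0 => _ [v _ <-].
rewrite addrC -lerBlDr; apply: lb_le_inf; first by exists (rho y z), z.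
move=> _ [v nUv <-]; rewrite lerBlDr addrC.
by apply: le_trans (rho_tri x y v); apply: (ge_inf (lb x)); exists v.
Qed.

Lemma compl_dist_gt0 {U : set T} {x : T} : rho_open rho U -> ~` U !=set0 ->
  0 < compl_dist U x <-> U x.
Proof.
case: rho_metric => rho_ge0 rho_eq _ _ oU [z nUz]; split => [gx0|Ux].
  apply: contrapT => nUx.
  have : compl_dist U x <= rho x x.
    by apply: ge_inf; [exists 0 => _ [v _ <-]; exact: rho_ge0 | exists x].
  by rewrite (rho_eq x x).2 // leNgt gx0.
have [r r0 ball_U] := oU x Ux; apply: lt_le_trans r0 _.
apply: lb_le_inf; first by exists (rho x z), z.
by move=> _ [v nUv <-]; rewrite leNgt; apply/negP => /ball_U.
Qed.

Lemma lc_approximable_open (U : set T) :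
  rho_open rho U -> lc_approximable_set U.
Proof.
move=> oU; have [->|/setTPn[z nUz]] := eqVneq U setT.
  by rewrite -setC0; exact/lc_approximable_setC/lc_approximable_set0.
have nU : ~` U !=set0 by exists z.
pose g := compl_dist U; have glip : rho_lipschitz g := compl_dist_lipschitz nU.
pose V n := [set x | n.+1%:R^-1 < g x].
have mV n : measurable (V n) := rho_open_measurable (rho_open_gt glip).
have ndV : nondecreasing_seq V.
  move=> m n mn; apply/subsetPset => x /=; apply: le_lt_trans.
  by rewrite lef_pV2 ?posrE // ler_nat ltnS.
have UV : \bigcup_n V n = U.
  apply/seteqP; split => [x [n _ /= Vnx]|x /(compl_dist_gt0 oU nU)].
    by apply/(compl_dist_gt0 oU nU); apply: lt_trans Vnx; rewrite invr_gt0.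
  by move=> /ltr_add_invr[n]; rewrite add0r => ?; exists n.
split; first exact: rho_open_measurable.
move=> e e0; have [n] := bigcup_setD_measure_lt nu_fin mV ndV e0.
rewrite UV => UVn.
have n_gt0 : 0 < n.+1%:R^-1 :> R by rewrite invr_gt0.
have [t /andP[t0 tn] null_t] :=
  exists_null_level nu_fin (measurable_level glip) n_gt0.
have mW : measurable [set x | t < g x] := rho_open_measurable (rho_open_gt glip).
exists [set x | t < g x]; split => //; first exact: ae_locally_constant_superlevel.
apply: le_lt_trans UVn; apply: le_measure; rewrite ?inE.
- by apply: mem_set; apply: measurableY => //; exact: rho_open_measurable.
- by apply: mem_set; apply: measurableD => //; exact: rho_open_measurable.
move=> x [[Ux tgx]|[tgx nUx]].
  by split => // /= Vnx; apply: tgx; exact: lt_trans tn Vnx.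
by exfalso; apply/nUx/(compl_dist_gt0 oU nU); exact: lt_trans t0 tgx.
Qed.

Lemma measurable_lc_approximable_set (A : set T) :
  measurable A -> lc_approximable_set A.
Proof.
rewrite rho_borel => mA; apply: (smallest_sub _ _ mA) => [|U]; last first.
  exact: lc_approximable_open.
split; [exact: lc_approximable_set0 | move=> B | exact: lc_approximable_bigcup].
by rewrite setTD; exact: lc_approximable_setC.
Qed.

Definition lc_approximable (f : T -> R) := forall e : R, 0 < e ->
  exists g : T -> R, [/\ nu.-integrable setT (EFin \o g), ae_locally_constant g &
    (\int[nu]_x (`|f x - g x|)%:E < e%:E)%E].

Lemma lc_approximable0 : lc_approximable (fun=> 0).
Proof.
move=> e e0; exists (fun=> 0); split.
- exact: integrable0.
- exact: ae_locally_constant_cst.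
by under eq_integral do rewrite subrr normr0; rewrite integral0 lte_fin.
Qed.

Lemma lc_approximableD (f g : T -> R) :
  measurable_fun setT f -> measurable_fun setT g ->
  lc_approximable f -> lc_approximable g -> lc_approximable (fun x => f x + g x).
Proof.
move=> mf mg apf apg e e0; have e2 : 0 < e / 2 by rewrite divr_gt0.
have [f' [intf' lcf' ff']] := apf _ e2; have [g' [intg' lcg' gg']] := apg _ e2.
have /integrableP[/measurable_EFinP mf' _] := intf'.
have /integrableP[/measurable_EFinP mg' _] := intg'.
exists (fun x => f' x + g' x); split.
- apply: eq_integrable measurableT _ _ _ (integrableD measurableT intf' intg').
  by move=> x _; rewrite /= EFinD.
- apply: ae_locally_constant_factor (ae_locally_constant_pair lcf' lcg') _.
  by move=> x y [-> ->].
rewrite (eq_integral (fun x => (`|(f x - f' x) + (g x - g' x)|)%:E)); last first.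
  by move=> x _; rewrite opprD addrACA.
have mff' := measurable_funB mf mf'; have mgg' := measurable_funB mg mg'.
have := integral_normD_le (nu := nu) mff' mgg'.
move=> /le_lt_trans; apply.
by rewrite (splitr e) EFinD lteD.
Qed.

Lemma lc_approximable_sum (I : Type) (r : seq I) (F : I -> T -> R) :
  (forall i, measurable_fun setT (F i)) -> (forall i, lc_approximable (F i)) ->
  lc_approximable (fun x => \sum_(i <- r) F i x).
Proof.
move=> mF apF; elim: r => [|i r IH].
  by under eq_fun do rewrite big_nil; exact: lc_approximable0.
under eq_fun do rewrite big_cons.
by apply: lc_approximableD => //; exact: measurable_sum.
Qed.

Lemma lc_approximable_indic (A : set T) (c : R) :
  measurable A -> lc_approximable (fun x => c * \1_A x).
Proof.
move=> /measurable_lc_approximable_set[mA apA] e e0.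
have ce0 : 0 < e / (`|c| + 1) by rewrite divr_gt0 // ltr_wpDl.
have [B [mB lcB AB]] := apA _ ce0; exists (fun x => c * \1_B x); split.
- have := integrableZl measurableT c (integrable_indic_finite nu_fin mB).
  apply: eq_integrable measurableT _ _ _.
  by move=> x _; rewrite /= EFinM.
- apply: ae_locally_constant_factor lcB _ => x y Bxy.
  by rewrite /indic /in_mem /= /in_set Bxy.
rewrite (eq_integral (fun x => `|c|%:E * (\1_(A `+` B) x)%:E)%E); last first.
  by move=> x _; rewrite -mulrBr normrM indic_setY EFinM.
have mAB := measurableY mA mB.
rewrite ge0_integralZl_EFin //; last exact/measurable_EFinP/measurable_indic.
rewrite integral_indic ?setIT //.
apply: le_lt_trans (lee_wpmul2l _ (ltW AB)) _; first by rewrite lee_fin.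
rewrite -EFinM lte_fin mulrA ltr_pdivrMr ?ltr_wpDl //.
by rewrite mulrDr mulr1 mulrC ltrDl.
Qed.

Lemma lc_approximable_sfun (g : {sfun T >-> R}) : lc_approximable g.
Proof.
rewrite (funext (fimfunEord g)); apply: lc_approximable_sum => i.
  by apply: measurable_funM => //; exact/measurable_indic/measurable_funPTI.
by apply: lc_approximable_indic; exact: measurable_funPTI.
Qed.

End metric_measure_space.

Theorem proposition2 (R : realType) (d : measure_display) (T : measurableType d)
  (rho : T -> T -> R) (nu : {measure set T -> \bar R})
  (hmetric : is_metric rho)
  (hdoubling : doubling rho)
  (hborel : @measurable d T = <<s rho_open rho >>)
  (hfinite : (nu setT < +oo)%E)
  (eta : T -> R) (heta : nu.-integrable setT (EFin \o eta))
  (delta : R) (hdelta : 0 < delta) :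
  exists eta' : T -> R,
    [/\ nu.-integrable setT (EFin \o eta'),
        nu.-negligible (boundary rho eta') &
        (\int[nu]_x (`|eta x - eta' x|)%:E < delta%:E)%E].
Proof.
have delta2 : 0 < delta / 2 by rewrite divr_gt0.
have [g eta_g] := sfun_dense_integrable heta delta2.
have [eta' [int_eta' lc_eta' g_eta']] :=
  lc_approximable_sfun hfinite hmetric hborel g _ delta2.
exists eta'; split => //; first exact: ae_locally_constant_boundary lc_eta'.
have /integrableP[/measurable_EFinP meta _] := heta.
have /integrableP[/measurable_EFinP meta' _] := int_eta'.
rewrite (eq_integral (fun x => (`|(eta x - g x) + (g x - eta' x)|)%:E)); last first.
  by move=> x _; rewrite addrA subrK.
have mg : measurable_fun setT g := measurable_funP g.
have := integral_normD_le (nu := nu) (measurable_funB meta mg)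
  (measurable_funB mg meta').
by move=> /le_lt_trans; apply; rewrite (splitr delta) EFinD lteD.
Qed.
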